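(* Let $t$ be a positive integer. The map sending a partition to its $V_{2t+2,t}$-coding is injective on $\mathcal{DD}_{(2t+2)}$, and the map sending a partition to its $V_{2t,t}$-coding is injective on $\mathcal{SC}_{(2t)}$; that is, each element of $\mathcal{DD}_{(2t+2)}$ (respectively $\mathcal{SC}_{(2t)}$) is in bijective correspondence with its $V_{g,t}$-coding, where $g=2t+2$ (respectively $g=2t$).
   Context: A partition $\lambda=(\lambda_1\geq\lambda_2\geq\dots)$ (with $\lambda_i=0$ for $i>\ell(\lambda)$) has Ferrers diagram consisting of boxes $(i,j)$ with $1\leq j\leq\lambda_i$; $\lambda'$ is the conjugate partition. The hook length of a box $(i,j)$ is $\lambda_i-j+\lambda'_j-i+1$. The Durfee size is $d_\lambda=\max\{s:\lambda_s\geq s\}$. A partition is a $k$-core if none of its hook lengths is divisible by $k$. $\mathcal{DD}$ is the set of partitions $\lambda$ with $\lambda_i=\lambda'_i+1$ for all $1\leq i\leq d_\lambda$; $\mathcal{SC}$ is the set of self-conjugate partitions ($\lambda=\lambda'$); $\mathcal{DD}_{(k)}$, $\mathcal{SC}_{(k)}$ denote their subsets of $k$-cores. $V_{g,t}$-coding (for integers $1\leq t\leq g$): for a partition $\lambda$ and each residue $r\in\{0,\dots,g-1\}$, let $\beta_r=g+\max\{\lambda_j-j: j\geq 1,\ \lambda_j-j\equiv r \pmod g\}$ ($j$ ranging over all positive integers, $\lambda_j=0$ for $j>\ell(\lambda)$). These are distinct; list them decreasingly $\beta_{\sigma(1)}>\dots>\beta_{\sigma(g)}$. The $V_{g,t}$-coding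 of $\lambda$ is $(v_1,\dots,v_t)=(\beta_{\sigma(1)},\dots,\beta_{\sigma(t)})\in\mathbb{Z}^t$. *)

From mathcomp Require Import all_boot all_order all_algebra.
From mathcomp Require Import intdiv.
Set Implicit Arguments. Unset Strict Implicit. Unset Printing Implicit Defensive.
Import Order.TTheory GRing.Theory Num.Theory.

Definition is_part (l : seq nat) : bool := sorted geq l && (0 \notin l).

(* lambda_i, 1-indexed, with lambda_i = 0 for i > length. *)
Definition lam (l : seq nat) (i : nat) : nat := nth 0 l i.-1.

Definition conjp (l : seq nat) : seq nat :=
  mkseq (fun j => count (fun x => j.+1 <= x) l) (head 0 l).

Definition hook (l : seq nat) (i j : nat) : nat :=
  (lam l i - j) + (lam (conjp l) j - i) + 1.

Definition is_core (k : nat) (l : seq nat) : bool :=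
  all (fun i => all (fun j => ~~ (k %| hook l i j)) (iota 1 (lam l i)))
      (iota 1 (size l)).

Definition durfee (l : seq nat) : nat :=
  \max_(1 <= s < (size l).+1 | s <= lam l s) s.

Definition inDD (l : seq nat) : Prop :=
  forall i, 1 <= i <= durfee l -> lam l i = lam (conjp l) i + 1.

Definition inSC (l : seq nat) : Prop := l = conjp l.

Definition IsMaxOf (P : int -> Prop) (m : int) : Prop :=
  P m /\ forall x, P x -> (x <= m)%R.

Definition IsBeta (g : nat) (l : seq nat) (r : nat) (b : int) : Prop :=
  IsMaxOf (fun x => exists2 j : nat, 1 <= j &
             x = ((lam l j)%:Z - j%:Z)%R /\ ((x - r%:Z)%R \in dvdz g%:Z))
          (b - g%:Z)%R.

Definition VCoding (g t : nat) (l : seq nat) (v : seq int) : Prop :=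
  exists beta : nat -> int,
    (forall r, r < g -> IsBeta g l r (beta r)) /\
    v = take t (sort (fun a b : int => (b <= a)%R) [seq beta r | r <- iota 0 g]).

From mathcomp Require Import all_boot all_order all_algebra.
From mathcomp Require Import zify ring intdiv.
Set Implicit Arguments. Unset Strict Implicit. Unset Printing Implicit Defensive.
Import Order.TTheory GRing.Theory Num.Theory.

(* Let S(l) = {l_j - j : j >= 1}, the beads of the Maya diagram of l; it determines l, and
   the beads of the conjugate are the reflections -1 - x of the gaps x of S(l).  A bead x
   above a gap x - g is a box of hook length g, so for a g-core S(l) is closed under
   x |-> x - g: on each residue class r mod g it is everything up to beta_r - g, and the
   beta_r determine l.  Self-conjugacy (S(l) is the reflection of its complement) forces
   beta_r + beta_(g-1-r) = g - 1; the doubled distinct condition (0 is a gap and x <> 0 is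
   a bead iff -x is a gap) forces beta_0 = 0 and beta_r + beta_(g-r) = g.  In both cases
   exactly one beta of each pair lies above the threshold t (resp. t + 2), so the betas
   above it are exactly the t largest ones, i.e. the coding, and the pairing recovers the
   others. *)

Lemma lam_default l j : size l < j -> lam l j = 0.
Proof. by move=> lt_l_j; rewrite /lam nth_default // -ltnS prednK // (leq_ltn_trans _ lt_l_j). Qed.

Section Partition.
Variable l : seq nat.
Hypothesis part_l : is_part l.

Lemma lam_nonincr i j : i <= j -> lam l j <= lam l i.
Proof.
move=> le_ij; rewrite /lam; have [lt_j|le_j] := ltnP j.-1 (size l).
  have geq_tr : transitive geq by move=> ? ? ? le1 le2; exact: leq_trans le2 le1.
  case/andP: part_l => sorted_l _.
  by apply: (sorted_leq_nth geq_tr leqnn) => //; rewrite ?inE; lia.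
by rewrite (nth_default _ le_j).
Qed.

Lemma conjp_lam j : 0 < j -> lam (conjp l) j = count (fun x => j <= x) l.
Proof.
move=> j_gt0; rewrite /lam /conjp.
have [lt_head|le_head] := ltnP j.-1 (head 0 l); first by rewrite nth_mkseq // prednK.
rewrite nth_default ?size_mkseq //; apply/esym/eqP; rewrite -leqn0 leqNgt -has_count.
apply/hasP=> -[x /(nthP 0)[k lt_k <-]] /=.
have := lam_nonincr (isT : 1 <= k.+1); move: le_head; rewrite /lam /= -nth0; lia.
Qed.

End Partition.

Lemma is_part_behead y l : is_part (y :: l) -> is_part l.
Proof.
by rewrite /is_part in_cons negb_or => /and3P[/path_sorted-> _].
Qed.

Lemma leq_lam_conjp l i j : is_part l -> 0 < i -> 0 < j ->
  (i <= lam (conjp l) j) = (j <= lam l i).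
Proof.
move=> part_l i_gt0 j_gt0; rewrite conjp_lam //.
elim: l i part_l i_gt0 => [|y l IHl] [|i] //= part_yl _.
  by rewrite /lam nth_nil; lia.
have le_y k : lam (y :: l) k.+1 <= y by apply: (lam_nonincr part_yl (ltn0Sn k)).
have [le_j_y|lt_y_j] := leqP j y.
  case: i => [|i]; first by rewrite /lam /= le_j_y.
  by rewrite add1n ltnS IHl //; exact: is_part_behead part_yl.
have -> : count (fun x => j <= x) l = 0.
  apply/eqP; rewrite -leqn0 leqNgt -has_count; apply/hasP=> -[x /(nthP 0)[k lt_k <-]].
  by have := le_y k.+1; rewrite /lam /=; lia.
by have := le_y i; lia.
Qed.

Lemma leq_durfee l k : k <= lam l k -> k <= durfee l.
Proof.
case: k => // k le_k.
have lt_k : k < size l.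
  by rewrite ltnNge; apply: contraL le_k => le_size; rewrite lam_default ?ltnS.
by apply: (leq_bigmax_seq (F := fun s => s)); rewrite ?mem_index_iota.
Qed.

Definition lamd (l : seq nat) (j : nat) : int := ((lam l j)%:Z - j%:Z)%R.

Definition in_maya (l : seq nat) (x : int) : Prop := exists2 j, 0 < j & x = lamd l j.

Lemma lamd_decr l i j : is_part l -> i < j -> (lamd l j < lamd l i)%R.
Proof. by move=> part_l lt_ij; have := lam_nonincr part_l (ltnW lt_ij); rewrite /lamd; lia. Qed.

Lemma lamd_default l j : size l < j -> lamd l j = (- j%:Z)%R.
Proof. by move=> lt_l_j; rewrite /lamd lam_default ?sub0r. Qed.

Section Hook.
Variables (l : seq nat) (i n : nat).
Hypotheses (part_l : is_part l) (i_gt0 : 0 < i) (n_gt0 : 0 < n).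

Lemma lamd_conjp_hook : n <= lam l i ->
  (lamd l i + lamd (conjp l) n + 1 = (hook l i n)%:Z)%R.
Proof.
move=> le_n; have := le_n; rewrite -leq_lam_conjp // => le_i.
by rewrite /lamd /hook; lia.
Qed.

Lemma lamd_conjp_lt0 : lam l i < n -> (lamd l i + lamd (conjp l) n + 1 < 0)%R.
Proof.
move=> lt_n; have := lt_n; rewrite ltnNge -leq_lam_conjp // -ltnNge => lt_i.
by rewrite /lamd; lia.
Qed.

End Hook.

Section Duality.
Variable l : seq nat.
Hypothesis part_l : is_part l.

Lemma maya_conjp_disjoint x : in_maya l x -> ~ in_maya (conjp l) (-1 - x)%R.
Proof.
move=> [i i_gt0 ->] [n n_gt0 E].
have [le_n|lt_n] := leqP n (lam l i).
  by have := lamd_conjp_hook part_l i_gt0 n_gt0 le_n; rewrite -E /hook; lia.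
by have := lamd_conjp_lt0 part_l i_gt0 n_gt0 lt_n; rewrite -E; lia.
Qed.

Lemma maya_conjp_total x : in_maya l x \/ in_maya (conjp l) (-1 - x)%R.
Proof.
pose below m := (0 < m) && (lamd l m < x)%R.
(* [k] is the last index with [lamd l k >= x]; column [x + k + 1] then has exactly [k] boxes. *)
have [|[//|k] /andP[_ lt_k1] min_k1] := ex_minnP (P := below).
  by exists (size l + `|x|%N).+1; rewrite /below lamd_default /=; lia.
have [/andP[k_gt0 /eqP lamd_k]|not_x] := boolP ((0 < k) && (lamd l k == x)).
  by left; exists k.
right; pose n := `|(x + k.+1%:Z)%R|%N.
move: lt_k1; rewrite /lamd => lt_k1.
have n_def : (n%:Z = x + k.+1%:Z)%R by rewrite /n; lia.
have n_gt0 : 0 < n by lia.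
have lt_conj : lam (conjp l) n <= k by rewrite leqNgt leq_lam_conjp //; lia.
have le_conj : k <= lam (conjp l) n.
  case: (posnP k) => [->//|k_gt0]; rewrite leq_lam_conjp //.
  move: not_x (min_k1 k); rewrite /below k_gt0 ltnn /lamd /= => /eqP ne_x.
  by move=> /contraFN /(_ erefl); rewrite -leNgt; lia.
by exists n => //; rewrite /lamd; lia.
Qed.

Lemma maya_conjpE x : in_maya (conjp l) (-1 - x)%R <-> ~ in_maya l x.
Proof.
split=> [conj_x maya_x|]; first exact: maya_conjp_disjoint maya_x conj_x.
by case: (maya_conjp_total x).
Qed.

Lemma maya_dec x : in_maya l x \/ ~ in_maya l x.
Proof. by case: (maya_conjp_total x) => [|/maya_conjpE]; [left|right]. Qed.

End Duality.

Lemma core_hook g l i j : is_core g l -> 0 < i -> 0 < j <= lam l i -> ~~ (g %| hook l i j).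
Proof.
move=> core_l i_gt0 /andP[j_gt0 le_j].
have le_i : i <= size l by rewrite leqNgt; apply: contraL le_j => /lam_default->; lia.
move/allP: core_l => /(_ i); rewrite mem_iota add1n ltnS i_gt0 le_i => /(_ isT) /allP; apply.
by rewrite mem_iota; lia.
Qed.

Section Core.
Variables (g : nat) (l : seq nat).
Hypotheses (part_l : is_part l) (core_l : is_core g l).

(* A gap at [x - g] below a bead at [x] is exactly a box with hook length [g]. *)
Lemma maya_core_sub x : in_maya l x -> in_maya l (x - g%:Z)%R.
Proof.
move=> maya_x; have [//|] := maya_conjp_total part_l (x - g%:Z)%R.
case: maya_x => [i i_gt0 ->] [n n_gt0 E].
have [le_n|lt_n] := leqP n (lam l i).
  have := core_hook core_l i_gt0 (introT andP (conj n_gt0 le_n)).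
  have := lamd_conjp_hook part_l i_gt0 n_gt0 le_n; rewrite -E.
  have -> : (lamd l i + (-1 - (lamd l i - g%:Z)) + 1 = g%:Z)%R by ring.
  by move=> [<-]; rewrite dvdnn.
by have := lamd_conjp_lt0 part_l i_gt0 n_gt0 lt_n; rewrite -E; lia.
Qed.

Lemma maya_core_subMn x k : in_maya l x -> in_maya l (x - (g * k)%:Z)%R.
Proof.
elim: k => [|k IHk] maya_x; first by rewrite muln0 subr0.
by have := maya_core_sub (IHk maya_x); rewrite mulnS addnC PoszD opprD addrA.
Qed.

End Core.

Section Residues.
Local Open Scope ring_scope.

Lemma dvdz_res_inj (g r s : nat) (x : int) : (r < g)%N -> (s < g)%N ->
  (g%:Z %| x - r%:Z)%Z -> (g%:Z %| x - s%:Z)%Z -> r = s.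
Proof.
move=> lt_r lt_s /dvdzP[q1 E1] /dvdzP[q2 E2].
have E : r%:Z - s%:Z = (q2 - q1) * g%:Z by rewrite mulrBl -E1 -E2; ring.
have q0 : q2 - q1 = 0 by nia.
by move: E; rewrite q0 mul0r; lia.
Qed.

Lemma dvdz_le_sub (g : nat) (x y : int) : (g%:Z %| y - x)%Z -> x < y -> x <= y - g%:Z.
Proof.
move=> /dvdzP[q E] lt_xy; have q_gt0 : 0 < q by nia.
have : g%:Z <= q * g%:Z by rewrite ler_peMl //; lia.
lia.
Qed.

Lemma dvdz_sub_modz (g : nat) (x : int) : (0 < g)%N ->
  exists2 r, (r < g)%N & (g%:Z %| x - r%:Z)%Z.
Proof.
move=> g_gt0; have g_neq0 : g%:Z != 0 by rewrite eqz_nat -lt0n.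
exists `|(x %% g%:Z)%Z|%N.
  by rewrite -ltz_nat gez0_abs ?modz_ge0 ?ltz_pmod.
by rewrite gez0_abs ?modz_ge0 // -eqz_mod_dvd modz_mod.
Qed.

End Residues.

Section Beta.
Local Open Scope ring_scope.
Variables (g : nat) (l : seq nat) (r : nat) (b : int).
Hypotheses (part_l : is_part l) (g_gt0 : (0 < g)%N) (core_l : is_core g l).
Hypothesis beta_b : IsBeta g l r b.

Lemma beta_res : (g%:Z %| b - r%:Z)%Z.
Proof.
case: beta_b => -[j _ [_ /dvdzP[q E]]] _; apply/dvdzP; exists (q + 1).
by rewrite mulrDl -E; ring.
Qed.

Lemma maya_beta_sub : in_maya l (b - g%:Z).
Proof. by case: beta_b => -[j j_gt0 [E _]] _; exists j. Qed.

Lemma maya_resE x : (g%:Z %| x - r%:Z)%Z -> in_maya l x <-> x <= b - g%:Z.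
Proof.
move=> res_x; split=> [[j j_gt0 Ej]|le_x].
  by case: beta_b => _; apply; exists j; rewrite -?Ej.
have /dvdzP[q E] : (g%:Z %| (b - g%:Z) - x)%Z.
  have -> : b - g%:Z - x = (b - r%:Z) - (x - r%:Z) - g%:Z by ring.
  exact: rpredB (rpredB beta_res res_x) (dvdzz _).
have q_ge0 : 0 <= q by nia.
have := maya_core_subMn part_l core_l `|q|%N maya_beta_sub.
by rewrite PoszM gez0_abs // mulrC -E opprB addrC subrK.
Qed.

Lemma beta_not_maya : ~ in_maya l b.
Proof. by move/(maya_resE beta_res); lia. Qed.

Lemma beta_neq_res (s : nat) : (r < g)%N -> (s < g)%N -> r != s -> b != s%:Z.
Proof.
move=> lt_r lt_s; apply: contraNneq => b_s; apply/eqP/(dvdz_res_inj lt_r lt_s beta_res).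
by rewrite b_s subrr dvdz0.
Qed.

Lemma beta_eq y : (g%:Z %| y - r%:Z)%Z -> in_maya l (y - g%:Z) -> ~ in_maya l y -> b = y.
Proof.
move=> res_y maya_yg not_maya_y.
have res_yg : (g%:Z %| (y - g%:Z) - r%:Z)%Z.
  by rewrite addrAC rpredB // dvdzz.
have le_yb : y <= b by move/(maya_resE res_yg): maya_yg; rewrite lerD2r.
have [lt_yb|le_by] := ltrP y b; last by apply/le_anti; rewrite le_by le_yb.
case: not_maya_y; apply/(maya_resE res_y)/dvdz_le_sub => //.
have -> : b - y = (b - r%:Z) - (y - r%:Z) by ring.
exact: rpredB beta_res res_y.
Qed.

End Beta.

Section DecreasingEnumeration.
Local Open Scope ring_scope.

Lemma decr_enum_le (f h : nat -> int) j :
  (forall i k, (i < k)%N -> f k < f i) -> (forall i k, (i < k)%N -> h k < h i) ->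
  (forall i, (i < j)%N -> f i = h i) -> (exists k, f j = h k) -> f j <= h j.
Proof.
move=> f_decr h_decr eq_below [k fj_hk]; have [lt_kj|le_jk] := ltnP k j.
  by have := f_decr _ _ lt_kj; rewrite (eq_below k) // -fj_hk ltxx.
by rewrite fj_hk; move: le_jk; rewrite leq_eqVlt => /predU1P[->//|/h_decr/ltW].
Qed.

Lemma decr_enum_uniq (f h : nat -> int) :
  (forall i k, (i < k)%N -> f k < f i) -> (forall i k, (i < k)%N -> h k < h i) ->
  (forall x, (exists j, x = f j) <-> (exists j, x = h j)) -> f =1 h.
Proof.
move=> f_decr h_decr same_range; elim/ltn_ind => j IHj; apply/le_anti/andP; split.
  by apply: decr_enum_le IHj _ => //; apply/same_range; exists j.
by apply: decr_enum_le => // [i /IHj//|]; apply/same_range; exists j.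
Qed.

End DecreasingEnumeration.

Lemma part_eq_nth l1 l2 : is_part l1 -> is_part l2 ->
  (forall j, nth 0 l1 j = nth 0 l2 j) -> l1 = l2.
Proof.
move=> /andP[_ l1_neq0] /andP[_ l2_neq0] eq_nth.
have le_size (s1 s2 : seq nat) : 0 \notin s2 -> (forall j, nth 0 s1 j = nth 0 s2 j) ->
    size s2 <= size s1.
  move=> s2_neq0 eq_s; rewrite leqNgt; apply: contraNN s2_neq0 => lt_s.
  by rewrite -(nth_default 0 (leqnn (size s1))) eq_s mem_nth.
apply: (eq_from_nth (x0 := 0)) => [|j _]; last exact: eq_nth.
by apply/eqP; rewrite eqn_leq !le_size.
Qed.

Lemma maya_inj l1 l2 : is_part l1 -> is_part l2 ->
  (forall x, in_maya l1 x <-> in_maya l2 x) -> l1 = l2.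
Proof.
move=> part_l1 part_l2 same_maya.
have decr l : is_part l -> forall i k, i < k -> (lamd l k.+1 < lamd l i.+1)%R.
  by move=> part_l i k lt_ik; apply: lamd_decr.
have maya_range l x : in_maya l x <-> exists j, x = lamd l j.+1.
  by split=> [[[//|j] _ ->]|[j ->]]; [exists j|exists j.+1].
have eq_lamd := decr_enum_uniq (decr _ part_l1) (decr _ part_l2).
have {}eq_lamd j : lamd l1 j.+1 = lamd l2 j.+1.
  by apply: eq_lamd => x; rewrite -!maya_range.
by apply: part_eq_nth => // j; have := eq_lamd j; rewrite /lamd /lam /=; lia.
Qed.

Definition betas (g : nat) (l : seq nat) (b : nat -> int) : Prop :=
  forall r, r < g -> IsBeta g l r (b r).

Lemma core_eq_of_betas g l1 l2 b1 b2 : 0 < g -> is_part l1 -> is_part l2 ->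
  is_core g l1 -> is_core g l2 -> betas g l1 b1 -> betas g l2 b2 ->
  (forall r, r < g -> b1 r = b2 r) -> l1 = l2.
Proof.
move=> g_gt0 part_l1 part_l2 core_l1 core_l2 beta_b1 beta_b2 eq_b.
apply: maya_inj => // x; have [r lt_r res_x] := dvdz_sub_modz x g_gt0.
rewrite (maya_resE part_l1 g_gt0 core_l1 (beta_b1 r lt_r) res_x).
by rewrite (maya_resE part_l2 g_gt0 core_l2 (beta_b2 r lt_r) res_x) eq_b.
Qed.

Section SelfConjugate.
Local Open Scope ring_scope.
Variable l : seq nat.
Hypotheses (part_l : is_part l) (sc_l : inSC l).

Lemma sc_mayaN x : in_maya l (-1 - x) <-> ~ in_maya l x.
Proof. by have := maya_conjpE part_l x; rewrite -sc_l. Qed.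

Lemma sc_beta_pair (g r : nat) (b b' : int) : (r < g)%N -> is_core g l ->
  IsBeta g l r b -> IsBeta g l (g - 1 - r) b' -> b + b' = g%:Z - 1.
Proof.
move=> lt_r core_l beta_b beta_b'; have g_gt0 : (0 < g)%N by lia.
suff -> : b' = g%:Z - 1 - b by ring.
apply: (beta_eq part_l g_gt0 core_l beta_b').
- have -> : g%:Z - 1 - b - (g - 1 - r)%N%:Z = - (b - r%:Z) by lia.
  by rewrite rpredN (beta_res beta_b).
- have -> : g%:Z - 1 - b - g%:Z = -1 - b by ring.
  by apply/sc_mayaN; exact: beta_not_maya beta_b.
- have -> : g%:Z - 1 - b = -1 - (b - g%:Z) by ring.
  by move/sc_mayaN; apply; exact: maya_beta_sub beta_b.
Qed.

End SelfConjugate.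

Section DoubledDistinct.
Local Open Scope ring_scope.
Variable l : seq nat.
Hypotheses (part_l : is_part l) (dd_l : inDD l).

Lemma dd_lamd_conjp k : (0 < k <= lam l k)%N -> lamd l k = lamd (conjp l) k + 1.
Proof.
move=> /andP[k_gt0 le_k]; have := dd_l (i := k); rewrite k_gt0 leq_durfee //= /lamd.
by move=> /(_ isT) ->; lia.
Qed.

Lemma dd_maya_conjp y : 0 <= y -> in_maya l y -> in_maya (conjp l) (y - 1).
Proof.
move=> y_ge0 [k k_gt0 y_def]; subst y; exists k => //.
by rewrite dd_lamd_conjp ?addrK // k_gt0; move: y_ge0; rewrite /lamd; lia.
Qed.

Lemma dd_conjp_maya y : 0 <= y -> in_maya (conjp l) y -> in_maya l (y + 1).
Proof.
move=> y_ge0 [k k_gt0 y_def]; subst y; exists k => //.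
have le_k : (k <= lam (conjp l) k)%N by move: y_ge0; rewrite /lamd; lia.
by rewrite dd_lamd_conjp // k_gt0 -leq_lam_conjp.
Qed.

Lemma dd_maya0 : ~ in_maya l 0.
Proof.
move=> maya0; apply: (maya_conjp_disjoint part_l maya0).
by rewrite subr0 -(sub0r 1); exact: dd_maya_conjp maya0.
Qed.

Lemma dd_mayaN y : y != 0 -> in_maya l (- y) <-> ~ in_maya l y.
Proof.
have flip (P Q : Prop) : P \/ ~ P -> (Q <-> ~ P) -> (P <-> ~ Q).
  move=> dec_P [QnP nPQ]; split=> [p q|nQ]; first exact: QnP q p.
  by case: dec_P => // /nPQ.
have pos z : 0 < z -> in_maya l (- z) <-> ~ in_maya l z.
  move=> z_gt0; apply: flip; first exact: maya_dec.
  have [conj_nmaya nmaya_conj] := maya_conjpE part_l (- z).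
  rewrite opprK addrC in conj_nmaya nmaya_conj.
  split=> [/(dd_maya_conjp (ltW z_gt0))//|/nmaya_conj].
  by move/dd_conjp_maya; rewrite subrK; apply; rewrite subr_ge0.
rewrite neq_lt => /orP[y_lt0|]; last exact: pos.
by apply: flip; [exact: maya_dec | rewrite -{1}(opprK y); apply: pos; rewrite oppr_gt0].
Qed.

Variable g : nat.
Hypotheses (g_gt0 : (0 < g)%N) (core_l : is_core g l).

Lemma dd_beta0 b : IsBeta g l 0 b -> b = 0.
Proof.
move=> beta_b; apply: (beta_eq part_l g_gt0 core_l beta_b).
- by rewrite subr0 dvdz0.
- have g_neq0 : g%:Z != 0 by rewrite eqz_nat -lt0n.
  rewrite sub0r; apply/(dd_mayaN g_neq0).
  by move/(maya_core_sub part_l core_l); rewrite subrr; exact: dd_maya0.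
- exact: dd_maya0.
Qed.

Lemma dd_beta_pair (r : nat) b b' : (0 < r < g)%N ->
  IsBeta g l r b -> IsBeta g l (g - r) b' -> b + b' = g%:Z.
Proof.
move=> /andP[r_gt0 lt_r] beta_b beta_b'.
suff -> : b' = g%:Z - b by ring.
have maya_bg := maya_beta_sub beta_b.
have b_neq0 : b != 0.
  apply/eqP => b0; have := beta_res beta_b; rewrite b0 => res_r.
  have res_0 : (g%:Z %| 0 - 0%:Z)%Z by rewrite subr0 dvdz0.
  by have := dvdz_res_inj lt_r g_gt0 res_r res_0; lia.
apply: (beta_eq part_l g_gt0 core_l beta_b').
- have -> : g%:Z - b - (g - r)%N%:Z = - (b - r%:Z) by lia.
  by rewrite rpredN (beta_res beta_b).
- rewrite addrAC subrr sub0r; apply/(dd_mayaN b_neq0).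
  exact: beta_not_maya beta_b.
- have bg_neq0 : b - g%:Z != 0 by apply: contraPneq dd_maya0 => <-.
  have -> : g%:Z - b = - (b - g%:Z) by ring.
  by move/(dd_mayaN bg_neq0); apply; exact: maya_bg.
Qed.

Lemma dd_beta_half (r : nat) b : g = (2 * r)%N -> IsBeta g l r b -> b = r%:Z.
Proof.
move=> g_2r beta_b; have lt_r : (0 < r < g)%N by lia.
have := dd_beta_pair lt_r beta_b; rewrite (_ : (g - r)%N = r); last lia.
by move=> /(_ _ beta_b); lia.
Qed.

End DoubledDistinct.

Lemma take_count_sorted_ge d (T : orderType d) (c : T) (s : seq T) :
  sorted (fun a b => (b <= a)%O) s -> take (count (>= c)%O s) s = filter (>= c)%O s.
Proof.
elim: s => [//|y s IHs] /= sorted_ys.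
have [le_cy|lt_yc] := leP c y; first by rewrite /= add0n IHs ?(path_sorted sorted_ys).
have le_y : all (<= y)%O s.
  by apply: order_path_min sorted_ys => a b e le1 le2; exact: le_trans le2 le1.
have none_ge : {in s, (>= c)%O =1 pred0}.
  by move=> x /(allP le_y) le_xy /=; apply/negbTE; rewrite -ltNge (le_lt_trans le_xy lt_yc).
by rewrite /= add0n (eq_in_count none_ge) (eq_in_filter none_ge) count_pred0 filter_pred0.
Qed.

Lemma mem_take_sort_ge d (T : orderType d) (c x : T) (s : seq T) :
  (x \in take (count (>= c)%O s) (sort (fun a b => (b <= a)%O) s)) = (c <= x)%O && (x \in s).
Proof.
have ge_total : total (fun a b : T => (b <= a)%O) by move=> a b; exact: le_total.
have /permP count_sort := permEl (perm_sort (fun a b : T => (b <= a)%O) s).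
rewrite -count_sort take_count_sorted_ge ?sort_sorted //.
by rewrite mem_filter mem_sort.
Qed.

Lemma count_iota_paired (P : pred nat) a n m :
  (forall i, i < n -> P (a + i) != P (a + 2 * n + m - 1 - i)) ->
  count P (iota a (2 * n + m)) = n + count P (iota (a + n) m).
Proof.
elim: n a => [|n IHn] a paired; first by rewrite addn0.
set z := a + 2 * n.+1 + m - 1.
have split_ends : iota a (2 * n.+1 + m) = a :: iota a.+1 (2 * n + m) ++ [:: z].
  rewrite (_ : z = a.+1 + (2 * n + m)); last lia.
  rewrite -[[:: _]]/(iota _ 1) -iotaD addn1 (_ : 2 * n.+1 + m = (2 * n + m).+2) //; lia.
rewrite split_ends /= count_cat /= IHn => [|i lt_i]; last first.
  by have := paired i.+1 lt_i; congr (P _ != P _); lia.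
have := paired 0 (ltn0Sn n); rewrite addn0 subn0 -/z (_ : a.+1 + n = a + n.+1); last lia.
by case: (P a); case: (P z) => //= _; lia.
Qed.

Section TopCoding.
Local Open Scope ring_scope.
Variables (g t : nat) (c : int) (b1 b2 : nat -> int) (v : seq int).
Hypotheses (res_b1 : forall s, (s < g)%N -> (g%:Z %| b1 s - s%:Z)%Z)
           (res_b2 : forall s, (s < g)%N -> (g%:Z %| b2 s - s%:Z)%Z).
Hypotheses (count_b1 : count (fun x => c <= x) (map b1 (iota 0 g)) = t)
           (count_b2 : count (fun x => c <= x) (map b2 (iota 0 g)) = t).
Hypotheses (v_b1 : v = take t (sort (fun x y : int => y <= x) (map b1 (iota 0 g))))
           (v_b2 : v = take t (sort (fun x y : int => y <= x) (map b2 (iota 0 g)))).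

Lemma eq_betas_top r : (r < g)%N -> c <= b2 r -> b1 r = b2 r.
Proof.
move=> lt_r le_c.
have : b2 r \in v by rewrite v_b2 -count_b2 mem_take_sort_ge le_c map_f // mem_iota.
rewrite v_b1 -count_b1 mem_take_sort_ge => /andP[_ /mapP[s]].
rewrite mem_iota add0n => lt_s b2r_def.
by have := dvdz_res_inj lt_r lt_s (res_b2 lt_r); rewrite b2r_def => /(_ (res_b1 lt_s)) ->.
Qed.

End TopCoding.

Section SelfConjugateBetas.
Local Open Scope ring_scope.
Variables (t : nat) (l : seq nat) (b : nat -> int).
Hypotheses (part_l : is_part l) (sc_l : inSC l) (core_l : is_core (2 * t) l).
Hypothesis beta_b : betas (2 * t) l b.

Lemma sc_betas_pair r : (r < 2 * t)%N -> b r + b (2 * t - 1 - r)%N = (2 * t)%N%:Z - 1.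
Proof.
move=> lt_r; have lt_j : (2 * t - 1 - r < 2 * t)%N by lia.
exact (sc_beta_pair part_l sc_l lt_r core_l (beta_b lt_r) (beta_b lt_j)).
Qed.

Lemma sc_betas_count : count (fun x => t%:Z <= x) (map b (iota 0 (2 * t))) = t.
Proof.
rewrite count_map -[t in RHS]addn0 -[(2 * t)%N]addn0 (count_iota_paired (a := 0)) //= => i lt_i.
rewrite !add0n addn0; have lt_i2 : (i < 2 * t)%N by lia.
by have := sc_betas_pair lt_i2; case: lerP; case: lerP => //=; lia.
Qed.

End SelfConjugateBetas.

Section DoubledDistinctBetas.
Local Open Scope ring_scope.
Variables (t : nat) (l : seq nat) (b : nat -> int).
Hypotheses (part_l : is_part l) (dd_l : inDD l) (core_l : is_core (2 * t + 2) l).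
Hypothesis beta_b : betas (2 * t + 2) l b.
Let g_gt0 : (0 < 2 * t + 2)%N. Proof. by rewrite addn2. Qed.

Lemma dd_betas0 : b 0 = 0.
Proof. exact (dd_beta0 part_l dd_l g_gt0 core_l (beta_b g_gt0)). Qed.

Lemma dd_betas_mid : b t.+1 = t.+1%:Z.
Proof.
have lt_mid : (t.+1 < 2 * t + 2)%N by lia.
have g_mid : (2 * t + 2 = 2 * t.+1)%N by lia.
exact (dd_beta_half part_l dd_l g_gt0 core_l g_mid (beta_b lt_mid)).
Qed.

Lemma dd_betas_pair r : (0 < r < 2 * t + 2)%N -> b r + b (2 * t + 2 - r)%N = (2 * t + 2)%N%:Z.
Proof.
move=> lt_r; have lt_r1 : (r < 2 * t + 2)%N by case/andP: lt_r.
have lt_j : (2 * t + 2 - r < 2 * t + 2)%N by lia.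
exact (dd_beta_pair part_l dd_l g_gt0 core_l lt_r (beta_b lt_r1) (beta_b lt_j)).
Qed.

Lemma dd_betas_count : count (fun x => (t + 2)%N%:Z <= x) (map b (iota 0 (2 * t + 2))) = t.
Proof.
rewrite count_map (_ : (2 * t + 2 = 1 + (2 * t + 1))%N); last lia.
rewrite iotaD count_cat (count_iota_paired (a := 1)) => [|i lt_i].
  by rewrite /= add1n dd_betas0 dd_betas_mid !lez_nat; lia.
rewrite /= (_ : (1 + 2 * t + 1 - 1 - i = 2 * t + 2 - (1 + i))%N); last lia.
have lt_i1 : (1 + i < 2 * t + 2)%N by lia.
have lt_mid : (t.+1 < 2 * t + 2)%N by lia.
have ne_mid : (1 + i != t.+1)%N by lia.
have lt_i1' : (0 < 1 + i < 2 * t + 2)%N by lia.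
have /eqP := beta_neq_res (beta_b lt_i1) lt_i1 lt_mid ne_mid; have := dd_betas_pair lt_i1'.
by case: lerP; case: lerP => //=; lia.
Qed.

End DoubledDistinctBetas.

Section Codings.
Local Open Scope ring_scope.
Variable t : nat.

Lemma sc_coding_inj l1 l2 v : (0 < t)%N -> is_part l1 -> is_part l2 -> inSC l1 -> inSC l2 ->
  is_core (2 * t) l1 -> is_core (2 * t) l2 ->
  VCoding (2 * t) t l1 v -> VCoding (2 * t) t l2 v -> l1 = l2.
Proof.
move=> t_gt0 part_l1 part_l2 sc_l1 sc_l2 core_l1 core_l2 [b1 [beta_b1 v_b1]] [b2 [beta_b2 v_b2]].
have g_gt0 : (0 < 2 * t)%N by lia.
have top := eq_betas_top (fun s lt_s => beta_res (beta_b1 s lt_s))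
  (fun s lt_s => beta_res (beta_b2 s lt_s)) (sc_betas_count part_l1 sc_l1 core_l1 beta_b1)
  (sc_betas_count part_l2 sc_l2 core_l2 beta_b2) v_b1 v_b2.
apply: (core_eq_of_betas g_gt0 part_l1 part_l2 core_l1 core_l2 beta_b1 beta_b2) => r lt_r.
have [le_t|lt_t] := lerP t%:Z (b2 r); first exact: top.
have pair1 := sc_betas_pair part_l1 sc_l1 core_l1 beta_b1 lt_r.
have pair2 := sc_betas_pair part_l2 sc_l2 core_l2 beta_b2 lt_r.
by move: pair1; rewrite (top (2 * t - 1 - r)%N); lia.
Qed.

Lemma dd_coding_inj l1 l2 v : is_part l1 -> is_part l2 -> inDD l1 -> inDD l2 ->
  is_core (2 * t + 2) l1 -> is_core (2 * t + 2) l2 ->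
  VCoding (2 * t + 2) t l1 v -> VCoding (2 * t + 2) t l2 v -> l1 = l2.
Proof.
move=> part_l1 part_l2 dd_l1 dd_l2 core_l1 core_l2 [b1 [beta_b1 v_b1]] [b2 [beta_b2 v_b2]].
have g_gt0 : (0 < 2 * t + 2)%N by lia.
have top := eq_betas_top (fun s lt_s => beta_res (beta_b1 s lt_s))
  (fun s lt_s => beta_res (beta_b2 s lt_s)) (dd_betas_count part_l1 dd_l1 core_l1 beta_b1)
  (dd_betas_count part_l2 dd_l2 core_l2 beta_b2) v_b1 v_b2.
apply: (core_eq_of_betas g_gt0 part_l1 part_l2 core_l1 core_l2 beta_b1 beta_b2) => r lt_r.
have [->|r_gt0] := posnP r.
  rewrite (dd_betas0 part_l1 dd_l1 core_l1 beta_b1).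
  by rewrite (dd_betas0 part_l2 dd_l2 core_l2 beta_b2).
have [->|ne_mid] := eqVneq r t.+1.
  rewrite (dd_betas_mid part_l1 dd_l1 core_l1 beta_b1).
  by rewrite (dd_betas_mid part_l2 dd_l2 core_l2 beta_b2).
have [le_t|lt_t] := lerP (t + 2)%N%:Z (b2 r); first exact: top.
have lt_mid : (t.+1 < 2 * t + 2)%N by lia.
have /eqP b2_mid := beta_neq_res (beta_b2 r lt_r) lt_r lt_mid ne_mid.
have lt_r' : (0 < r < 2 * t + 2)%N by rewrite r_gt0.
have pair1 := dd_betas_pair part_l1 dd_l1 core_l1 beta_b1 lt_r'.
have pair2 := dd_betas_pair part_l2 dd_l2 core_l2 beta_b2 lt_r'.
by move: pair1; rewrite (top (2 * t + 2 - r)%N); lia.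
Qed.

End Codings.

Unset Implicit Arguments.

Theorem proposition3p3 (t : nat) (ht : 0 < t) :
  (forall (l1 l2 : seq nat) (v : seq int),
      is_part l1 -> is_part l2 ->
      inDD l1 -> inDD l2 ->
      is_core (2 * t + 2) l1 -> is_core (2 * t + 2) l2 ->
      VCoding (2 * t + 2) t l1 v -> VCoding (2 * t + 2) t l2 v ->
      l1 = l2) /\
  (forall (l1 l2 : seq nat) (v : seq int),
      is_part l1 -> is_part l2 ->
      inSC l1 -> inSC l2 ->
      is_core (2 * t) l1 -> is_core (2 * t) l2 ->
      VCoding (2 * t) t l1 v -> VCoding (2 * t) t l2 v ->
      l1 = l2).
Proof. by split=> l1 l2 v; [exact: dd_coding_inj | exact: sc_coding_inj]. Qed.
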